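(* Let $A$ and $B$ be automata such that $A$ is a forest and $A\le_{*T}B$. Then $A\le_B B$.
   Context: An automaton $A$ consists of a set $\mathrm{states}(A)$ of states, a nonempty set $\mathrm{start}(A)\subseteq\mathrm{states}(A)$ of start states, a set $\mathrm{acts}(A)$ of actions containing a distinguished internal action $\tau$, and a set $\mathrm{steps}(A)\subseteq\mathrm{states}(A)\times\mathrm{acts}(A)\times\mathrm{states}(A)$ of steps; write $s\xrightarrow{a}_A t$ for $(s,a,t)\in\mathrm{steps}(A)$. An execution fragment of $A$ is a finite or infinite alternating sequence $s_0a_1s_1a_2s_2\cdots$ of states and actions, beginning with a state and, if finite, ending with a state, such that $s_{i-1}\xrightarrow{a_i}_A s_i$ for all $i>0$. An execution is an execution fragment whose first state is a start state. The trace of an execution fragment is the subsequence of its non-$\tau$ actions; a trace of $A$ is the trace of some execution of $A$, and $\mathrm{traces}^*(A)$ is the set of finite traces of $A$. $A\le_{*T}B$ means $\mathrm{traces}^*(A)\subseteq\mathrm{traces}^*(B)$. $A$ is a forest if for each state $s$ of $A$ there is exactly one (finite) execution of $A$ whose last state is $s$. For a relation $R$ write $R[s]=\{u\mid (s,u)\in R\}$. A normed backward simulation from $A$ to $B$ is a pair $(b,n)$ where $b\subseteq\mathrm{states}(A)\times\mathrm{states}(B)$ is total (every $s\in\mathrm{states}(A)$ has $b[s]\neq\emptyset$) and $n:(\mathrm{steps}(A)\cup\mathrm{start}(A))\times\mathrm{states}(B)\to S$ for some set $S$ with a well-founded strict order $<$, such that: (1) if $s\in\mathrm{start}(A)$ and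 $u\in b[s]$ then (a) $u\in\mathrm{start}(B)$, or (b) there is $v\in b[s]$ with $v\xrightarrow{\tau}_B u$ and $n(s,v)<n(s,u)$; (2) if $t\xrightarrow{a}_A s$ and $u\in b[s]$ then (a) $u\in b[t]$ and $a=\tau$, or (b) there is $v\in b[t]$ with $v\xrightarrow{a}_B u$, or (c) there is $v\in b[s]$ with $v\xrightarrow{\tau}_B u$ and $n(t\xrightarrow{a}s,v)<n(t\xrightarrow{a}s,u)$. Write $A\le_B B$ if one exists. *)

From Stdlib Require Import List Relations Wellfounded.
Import ListNotations.
Set Implicit Arguments.

Record automaton (L : Type) := Automaton {
  state : Type;
  start : state -> Prop;
  step  : state -> L -> state -> Prop;
  start_nonempty : exists s, start s
}.
Arguments state {L} a.
Arguments start {L} a _.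
Arguments step {L} a _ _ _.

Section Aut.
Variables (L : Type) (tau : L).

(* A finite execution fragment s0 a1 s1 ... an sn is represented as
   (s0, [(a1,s1); ...; (an,sn)]). *)
Fixpoint frag_valid (A : automaton L) (s0 : state A)
    (r : list (L * state A)) : Prop :=
  match r with
  | [] => True
  | (a, s1) :: r' => step A s0 a s1 /\ frag_valid A s1 r'
  end.

Definition frag_last (A : automaton L) (s0 : state A) (r : list (L * state A))
  : state A := last (map snd r) s0.

Definition fin_execution (A : automaton L) (s0 : state A)
    (r : list (L * state A)) : Prop :=
  start A s0 /\ frag_valid A s0 r.

Inductive is_trace : list L -> list L -> Prop :=
  | tr_nil : is_trace [] []
  | tr_tau : forall l b, is_trace l b -> is_trace (tau :: l) b
  | tr_ext : forall a l b, a <> tau -> is_trace l b -> is_trace (a :: l) (a :: b).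

(* An infinite execution s0 a1 s1 a2 s2 ... given by st : nat -> state,
   ac : nat -> L (ac i = a_i for i >= 1; ac 0 is unused). *)
Definition inf_execution (A : automaton L) (st : nat -> state A)
    (ac : nat -> L) : Prop :=
  start A (st 0) /\ forall i, step A (st i) (ac (S i)) (st (S i)).

Definition acts_prefix (ac : nat -> L) (N : nat) : list L :=
  map (fun i => ac (S i)) (seq 0 N).

Definition fin_traces (A : automaton L) (b : list L) : Prop :=
  (exists s0 r, fin_execution A s0 r /\ is_trace (map fst r) b)
  \/ (exists st ac N, inf_execution A st ac /\
        (forall i, N < i -> ac i = tau) /\ is_trace (acts_prefix ac N) b).

Definition trace_incl (A B : automaton L) : Prop :=
  forall b, fin_traces A b -> fin_traces B b.

Definition forest (A : automaton L) : Prop :=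
  forall s : state A,
    exists s0 r, fin_execution A s0 r /\ frag_last A s0 r = s /\
      forall s0' r', fin_execution A s0' r' -> frag_last A s0' r' = s ->
        s0' = s0 /\ r' = r.

(* Index set steps(A) ∪ start(A): [inl s] stands for the start state s,
   [inr (t,a,s)] for the step t -a-> s. *)
Definition norm_index (A : automaton L) : Type :=
  (state A + (state A * L * state A))%type.

Definition normed_backward_sim (A B : automaton L)
    (W : Type) (lt : W -> W -> Prop)
    (b : state A -> state B -> Prop)
    (n : norm_index A -> state B -> W) : Prop :=
  (forall s, exists u, b s u) /\
  (forall s u, start A s -> b s u ->
     start B u \/
     exists v, b s v /\ step B v tau u /\ lt (n (inl s) v) (n (inl s) u)) /\
  (forall t a s u, step A t a s -> b s u ->
     (b t u /\ a = tau) \/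
     (exists v, b t v /\ step B v a u) \/
     (exists v, b s v /\ step B v tau u /\
        lt (n (inr (t, a, s)) v) (n (inr (t, a, s)) u))).

Definition backward_le (A B : automaton L) : Prop :=
  exists (W : Type) (lt : W -> W -> Prop),
    well_founded lt /\ (forall x y z, lt x y -> lt y z -> lt x z) /\
    exists b n, @normed_backward_sim A B W lt b n.

End Aut.

(* Since A is a forest, every state s of A has a unique trace, the trace of the
   unique execution ending in s; by trace inclusion some execution of B has the
   same trace.  Relate s to every state u of B ending an execution with the
   trace of s, and let the norm of (s, u) be the length of a shortest such
   execution.  Going back one step along a shortest execution to u either stays
   related to s with a smaller norm (the step is internal), or consumes the last
   action of the trace of s, which is exactly what the backward simulation
   clauses for start states and steps of A ask for. *)

From Stdlib Require Import List Wf_nat Lia Classical ClassicalEpsilon.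
Import ListNotations.
Set Implicit Arguments.
Unset Strict Implicit.

Section Traces.
Variables (L : Type) (tau : L).

Lemma is_trace_functional l b1 b2 :
  is_trace tau l b1 -> is_trace tau l b2 -> b1 = b2.
Proof.
  intros H; revert b2; induction H; intros b2 H2; inversion H2; subst;
    try congruence; f_equal; auto.
Qed.

Lemma is_trace_exists l : exists b, is_trace tau l b.
Proof.
  induction l as [|a l [b Hb]].
  - exists []; constructor.
  - destruct (classic (a = tau)) as [->|Ha].
    + exists b; constructor; auto.
    + exists (a :: b); constructor; auto.
Qed.

Lemma is_trace_app l1 l2 b1 b2 :
  is_trace tau l1 b1 -> is_trace tau l2 b2 -> is_trace tau (l1 ++ l2) (b1 ++ b2).
Proof. intros H H2; induction H; simpl; try constructor; auto. Qed.

Lemma is_trace_snoc_inv l c b :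
  is_trace tau (l ++ [c]) b ->
  (c = tau /\ is_trace tau l b) \/
  (c <> tau /\ exists b', b = b' ++ [c] /\ is_trace tau l b').
Proof.
  revert b; induction l as [|a l IH]; simpl; intros b H.
  - inversion H as [|? ? Hn|? ? ? Hc Hn]; inversion Hn; subst.
    + left; split; auto; constructor.
    + right; split; auto; exists []; split; auto; constructor.
  - inversion H as [|? ? Hl|? ? b0 Ha Hl]; subst;
      destruct (IH _ Hl) as [[Hc Ht]|[Hc (b' & -> & Ht)]].
    + left; split; auto; constructor; auto.
    + right; split; auto; exists b'; split; auto; constructor; auto.
    + left; split; auto; constructor; auto.
    + right; split; auto; exists (a :: b'); split; auto; constructor; auto.
Qed.

End Traces.

Section Reachability.
Variables (L : Type) (tau : L) (A : automaton L).

Lemma frag_last_cons s0 a s1 r : frag_last A s0 ((a, s1) :: r) = frag_last A s1 r.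
Proof.
  unfold frag_last; simpl; generalize (map snd r) s1 s0; clear.
  induction l as [|y l IH]; intros x d; auto.
  simpl in IH |- *; rewrite (IH y d), (IH y x); reflexivity.
Qed.

Lemma frag_last_snoc s0 r a s : frag_last A s0 (r ++ [(a, s)]) = s.
Proof. unfold frag_last; rewrite map_app; apply last_last. Qed.

Lemma frag_valid_snoc s0 r a s :
  frag_valid A s0 (r ++ [(a, s)]) <->
  frag_valid A s0 r /\ step A (frag_last A s0 r) a s.
Proof.
  revert s0; induction r as [|[c s1] r IH]; intros s0; simpl.
  - tauto.
  - rewrite IH, frag_last_cons; tauto.
Qed.

Definition reaches_in (s : state A) (b : list L) (k : nat) : Prop :=
  exists s0 r, fin_execution A s0 r /\ frag_last A s0 r = s /\
    length r = k /\ is_trace tau (map fst r) b.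

Definition reaches (s : state A) (b : list L) : Prop :=
  exists k, reaches_in s b k.

Lemma reaches_in_start s : start A s -> reaches_in s [] 0.
Proof. intros Hs; exists s, []; repeat split; auto; constructor. Qed.

Lemma reaches_in_0_inv s b : reaches_in s b 0 -> start A s /\ b = [].
Proof.
  intros (s0 & r & [Hs _] & <- & Hr & Ht); destruct r; try discriminate.
  inversion Ht; auto.
Qed.

Lemma reaches_in_S_inv s b k :
  reaches_in s b (S k) ->
  exists t c, step A t c s /\
    ((c = tau /\ reaches_in t b k) \/
     (c <> tau /\ exists b', b = b' ++ [c] /\ reaches_in t b' k)).
Proof.
  intros (s0 & r & [Hs Hv] & Hl & Hr & Ht).
  destruct (exists_last (l := r)) as (r' & [c x] & ->);
    [intros ->; discriminate|].
  rewrite frag_last_snoc in Hl; subst x.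
  apply frag_valid_snoc in Hv as [Hv Hstep].
  rewrite length_app in Hr; simpl in Hr.
  rewrite map_app in Ht; simpl in Ht.
  assert (Hk : length r' = k) by lia.
  exists (frag_last A s0 r'), c; split; auto.
  destruct (is_trace_snoc_inv Ht) as [[Hc Ht']|[Hc (b' & -> & Ht')]].
  - left; split; auto; exists s0, r'; repeat split; auto.
  - right; split; auto; exists b'; split; auto; exists s0, r'; repeat split; auto.
Qed.

Lemma reaches_step t a s b :
  reaches t b -> step A t a s ->
  (a = tau /\ reaches s b) \/ (a <> tau /\ reaches s (b ++ [a])).
Proof.
  intros (k & s0 & r & [Hs Hv] & Hl & _ & Ht) Hstep.
  assert (Hrun : forall b', is_trace tau [a] b' -> reaches s (b ++ b')).
  { intros b' Hb'; exists (length (r ++ [(a, s)])), s0, (r ++ [(a, s)]).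
    split; [split; auto; apply frag_valid_snoc; subst; auto|].
    split; [apply frag_last_snoc|split; auto].
    rewrite map_app; apply is_trace_app; auto. }
  destruct (classic (a = tau)) as [->|Ha]; [left|right]; split; auto.
  - rewrite <- (app_nil_r b); apply Hrun; repeat constructor.
  - apply Hrun; repeat constructor; auto.
Qed.

Lemma fin_traces_reaches b : fin_traces tau A b -> exists s, reaches s b.
Proof.
  intros [(s0 & r & Hex & Ht)|(st & ac & N & [Hs Hst] & _ & Ht)].
  - exists (frag_last A s0 r), (length r), s0, r; auto.
  - set (r := map (fun i => (ac (S i), st (S i))) (seq 0 N)).
    assert (Hv : forall m k, frag_valid A (st m)
                   (map (fun i => (ac (S i), st (S i))) (seq m k))).
    { intros m k; revert m; induction k; simpl; auto. }
    exists (frag_last A (st 0) r), (length r), (st 0), r.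
    split; [split; [exact Hs|apply Hv]|repeat split].
    unfold r; rewrite map_map; exact Ht.
Qed.

Lemma reaches_fin_traces s b : reaches s b -> fin_traces tau A b.
Proof. intros (k & s0 & r & Hex & _ & _ & Ht); left; eauto. Qed.

Lemma forest_reaches : forest A -> forall s, exists b, reaches s b.
Proof.
  intros Hfor s; destruct (Hfor s) as (s0 & r & Hex & Hl & _).
  destruct (is_trace_exists tau (map fst r)) as [b Hb].
  exists b, (length r), s0, r; auto.
Qed.

Lemma forest_reaches_functional :
  forest A -> forall s b1 b2, reaches s b1 -> reaches s b2 -> b1 = b2.
Proof.
  intros Hfor s b1 b2 (k1 & s1 & r1 & e1 & l1 & _ & t1)
    (k2 & s2 & r2 & e2 & l2 & _ & t2).
  destruct (Hfor s) as (s0 & r & _ & _ & Huniq).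
  destruct (Huniq _ _ e1 l1) as [-> ->], (Huniq _ _ e2 l2) as [-> ->].
  eapply is_trace_functional; eauto.
Qed.

End Reachability.

Arguments reaches_in {L} tau A s b k.
Arguments reaches {L} tau A s b.

Definition least_nat (P : nat -> Prop) : nat :=
  epsilon (inhabits 0) (fun k => P k /\ forall k', P k' -> k <= k').

Lemma least_nat_spec (P : nat -> Prop) :
  (exists k, P k) -> P (least_nat P) /\ forall k, P k -> least_nat P <= k.
Proof.
  intros Hex; unfold least_nat; apply epsilon_spec.
  destruct (dec_inh_nat_subset_has_unique_least_element P (fun k => classic (P k)) Hex)
    as (k & Hk & _); eauto.
Qed.

Section Simulation.
Variables (L : Type) (tau : L) (A B : automaton L).
Hypothesis forest_A : forest A.

Definition trace_rel (s : state A) (u : state B) : Prop :=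
  exists b, reaches tau A s b /\ reaches tau B u b.

Definition trace_norm (s : state A) (u : state B) : nat :=
  least_nat (fun k => exists b, reaches tau A s b /\ reaches_in tau B u b k).

Definition index_target (i : norm_index A) : state A :=
  match i with inl s => s | inr (_, _, s) => s end.

Lemma trace_rel_total : trace_incl tau A B -> forall s, exists u, trace_rel s u.
Proof.
  intros Hincl s; destruct (forest_reaches tau forest_A s) as [b Hs].
  destruct (fin_traces_reaches (Hincl _ (reaches_fin_traces Hs))) as [u Hu].
  exists u, b; auto.
Qed.

Lemma trace_rel_back s u b :
  reaches tau A s b -> trace_rel s u ->
  (start B u /\ b = []) \/
  (exists v, step B v tau u /\ trace_rel s v /\ trace_norm s v < trace_norm s u) \/
  (exists v c b', c <> tau /\ b = b' ++ [c] /\ step B v c u /\ reaches tau B v b').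
Proof.
  intros Hs (b0 & Hs0 & k0 & Hu0).
  destruct (least_nat_spec (P := fun k => exists b, reaches tau A s b /\
                                          reaches_in tau B u b k))
    as [(b1 & Hs1 & Hu) Hmin]; [eauto|].
  fold (trace_norm s u) in Hu, Hmin.
  rewrite <- (forest_reaches_functional forest_A Hs1 Hs) in *.
  destruct (trace_norm s u) as [|k].
  - left; apply reaches_in_0_inv in Hu; auto.
  - right; destruct (reaches_in_S_inv Hu)
      as (v & c & Hstep & [[-> Hv]|[Hc (b' & -> & Hv)]]).
    + left; exists v; split; [|split]; [auto|exists b1; split; [|exists k]; auto|].
      enough (trace_norm s v <= k) by lia.
      apply least_nat_spec; eauto.
    + right; exists v, c, b'; repeat split; auto; exists k; auto.
Qed.

Lemma trace_rel_start s u :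
  start A s -> trace_rel s u ->
  start B u \/ exists v, trace_rel s v /\ step B v tau u /\
                         trace_norm s v < trace_norm s u.
Proof.
  intros Hs Hsu.
  assert (Hnil : reaches tau A s []) by (exists 0; apply reaches_in_start; auto).
  destruct (trace_rel_back Hnil Hsu)
    as [[Hu _]|[(v & ? & ? & ?)|(v & c & b' & _ & Hb & _)]]; eauto.
  destruct b'; discriminate.
Qed.

Lemma trace_rel_step t a s u :
  step A t a s -> trace_rel s u ->
  (trace_rel t u /\ a = tau) \/
  (exists v, trace_rel t v /\ step B v a u) \/
  (exists v, trace_rel s v /\ step B v tau u /\
             trace_norm s v < trace_norm s u).
Proof.
  intros Hstep Hsu; destruct (forest_reaches tau forest_A t) as [bt Ht].
  destruct (reaches_step Ht Hstep) as [[-> Hs]|[Ha Hs]].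
  - left; split; auto; destruct Hsu as (b & Hs' & Hu).
    rewrite (forest_reaches_functional forest_A Hs' Hs) in Hu; exists bt; auto.
  - destruct (trace_rel_back Hs Hsu)
      as [[_ Hb]|[(v & ? & ? & ?)|(v & c & b' & _ & Hb & Hvu & Hv)]].
    + destruct bt; discriminate.
    + right; right; eauto.
    + apply app_inj_tail in Hb as [<- <-].
      right; left; exists v; split; auto; exists bt; auto.
Qed.

End Simulation.

Theorem mainTheorem6 (L : Type) (tau : L) (A B : automaton L) :
  forest A -> trace_incl tau A B -> backward_le tau A B.
Proof.
  intros Hfor Hincl.
  exists nat, lt; split; [apply lt_wf|split; [intros; lia|]].
  exists (@trace_rel L tau A B), (fun i u => trace_norm tau (index_target i) u).
  split; [|split].
  - exact (trace_rel_total Hfor Hincl).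
  - exact (trace_rel_start Hfor).
  - intros t a s u; apply (trace_rel_step Hfor).
Qed.
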